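(* Let $0<q<1$, let $I=[0,b)$ with $0<b\le\infty$, and let $R,S,T:I\to\mathbb{R}$ be continuous functions such that $1-(1-q)tR(t)>0$ and $1-(1-q)tT(t)>0$ for all $t\in I$. For $x\in I$ put $$\Lambda(x)=\mathbb{1}-(1-q)x\begin{pmatrix}R(x)&S(x)\\0&T(x)\end{pmatrix},\qquad \Lambda(x;q)_n=\Lambda(q^{n-1}x)\cdots\Lambda(qx)\Lambda(x).$$ Then for every $x\in I$ the limit $\Lambda(x;q)_\infty=\lim_{n\to\infty}\Lambda(x;q)_n$ exists and $$\Lambda(x;q)_\infty=\begin{pmatrix}\exp\Big(\frac{1}{1-q}\int_0^x\frac{\ln(1-(1-q)tR(t))}{t}\,d_qt\Big) & B(x)\\[1mm] 0 & \exp\Big(\frac{1}{1-q}\int_0^x\frac{\ln(1-(1-q)tT(t))}{t}\,d_qt\Big)\end{pmatrix},$$ where $$B(x)=-\exp\Big(\frac{1}{1-q}\int_0^x\frac{\ln(1-(1-q)tT(t))}{t}\,d_qt\Big)\int_0^x\frac{S(t)}{1-(1-q)tR(t)}\exp\Big(\frac{1}{1-q}\int_0^t\frac1s\ln\frac{1-(1-q)sR(s)}{1-(1-q)sT(s)}\,d_qs\Big)d_qt.$$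
   Context: The Jackson $q$-integral is $\int_0^x f(t)\,d_qt=\sum_{n=0}^\infty(1-q)q^nx\,f(q^nx)$. In the integrands $\ln(\cdot)/t$, the value at $t=0$ never occurs since the $q$-integral only samples $t=q^nx$; for $x=0$ all $q$-integrals are $0$. $\mathbb{1}$ denotes the $2\times2$ identity matrix. *)

From HB Require Import structures.
From mathcomp Require Import all_boot all_order all_algebra.
From mathcomp Require Import all_classical all_reals all_analysis.
Set Implicit Arguments. Unset Strict Implicit. Unset Printing Implicit Defensive.
Import Order.TTheory GRing.Theory Num.Theory.
Import numFieldNormedType.Exports.
Local Open Scope ring_scope.
Local Open Scope classical_set_scope.

Definition jackson {R : realType} (q : R) (f : R -> R) (x : R) : R :=
  limn (fun N : nat => \sum_(0 <= n < N) ((1 - q) * q ^+ n * x * f (q ^+ n * x))).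

Definition mx2 {R : ringType} (a b c d : R) : 'M[R]_2 :=
  \matrix_(i < 2, j < 2)
    if (i == 0 :> nat) then (if (j == 0 :> nat) then a else b)
    else (if (j == 0 :> nat) then c else d).

Definition Lam {R : realType} (q : R) (Rf Sf Tf : R -> R) (x : R) : 'M[R]_2 :=
  1%:M - ((1 - q) * x) *: mx2 (Rf x) (Sf x) 0 (Tf x).

Fixpoint Lamn {R : realType} (q : R) (Rf Sf Tf : R -> R) (x : R) (n : nat)
  : 'M[R]_2 :=
  match n with
  | 0 => 1%:M
  | n'.+1 => Lam q Rf Sf Tf (q ^+ n' * x) * Lamn q Rf Sf Tf x n'
  end.

From HB Require Import structures.
From mathcomp Require Import all_boot all_order all_algebra.
From mathcomp Require Import all_classical all_reals all_analysis.
From mathcomp Require Import ring lra.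
Import Order.TTheory GRing.Theory Num.Theory.
Import numFieldNormedType.Exports.
Local Open Scope ring_scope.
Local Open Scope classical_set_scope.
Set Implicit Arguments. Unset Strict Implicit.

(* Every factor Lambda(q^k x) is upper triangular with diagonal entries
   a_k = 1 - (1-q) q^k x R(q^k x) and d_k = 1 - (1-q) q^k x T(q^k x), which are
   positive and geometrically close to 1.  Hence the diagonal of Lambda(x;q)_n
   consists of the partial products of a and d, which converge to
   exp(sum_k ln a_k) and exp(sum_k ln d_k); and since a Jackson integral of
   ln(1 - (1-q) t G(t))/t is exactly (1-q) times such a sum of logarithms,
   these limits are the stated exponentials.  The corner entry is
   (prod_(k<n) a_k) * sum_(k<n) s_k (prod_(j<k) d_j) / (prod_(j<=k) a_j), a
   geometrically dominated series, whose terms are recognized, via the tail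
   sums of the logarithms, as the samples of the Jackson integral defining B. *)

Lemma mx2_1 (R : nzRingType) : (1%:M : 'M[R]_2) = mx2 1 0 0 1.
Proof.
apply/matrixP => i j; rewrite !mxE.
by case: i => [[|[|i]] hi]; case: j => [[|[|j]] hj].
Qed.

Lemma mulmx2 (R : comNzRingType) (a b c d a' b' c' d' : R) :
  (mx2 a b c d * mx2 a' b' c' d' : 'M[R]_2) =
  mx2 (a * a' + b * c') (a * b' + b * d') (c * a' + d * c') (c * b' + d * d').
Proof.
apply/matrixP => i j; rewrite !mxE !big_ord_recr big_ord0 /= !mxE add0r.
by case: i => [[|[|i]] hi]; case: j => [[|[|j]] hj].
Qed.

Lemma cvg_mx2 (R : numFieldType) (a b c d : nat -> R) (a0 b0 c0 d0 : R) :
  a n @[n --> \oo] --> a0 -> b n @[n --> \oo] --> b0 ->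
  c n @[n --> \oo] --> c0 -> d n @[n --> \oo] --> d0 ->
  mx2 (a n) (b n) (c n) (d n) @[n --> \oo] --> mx2 a0 b0 c0 d0.
Proof.
move=> /cvg_entourageP ha /cvg_entourageP hb /cvg_entourageP hc /cvg_entourageP hd.
apply/cvg_mx_entourageP => A eA.
have : \forall n \near \oo, [/\ A (a0, a n), A (b0, b n), A (c0, c n) & A (d0, d n)].
  by near=> n; split; near: n; [exact: ha | exact: hb | exact: hc | exact: hd].
apply: filterS => n [h1 h2 h3 h4] i j /=; rewrite !mxE inE.
by case: ifP => _; case: ifP => _.
Unshelve. all: end_near.
Qed.

Lemma Lam_mx2 (R : realType) (q : R) (Rf Sf Tf : R -> R) (y : R) :
  Lam q Rf Sf Tf y =
  mx2 (1 - (1 - q) * y * Rf y) (- ((1 - q) * y * Sf y)) 0 (1 - (1 - q) * y * Tf y).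
Proof.
apply/matrixP => i j; rewrite /Lam !mxE.
by case: i => [[|[|i]] hi]; case: j => [[|[|j]] hj] //=;
  rewrite ?mulr1n ?mulr0n ?mulrA; ring.
Qed.

Lemma cvgn_ex_norm_le (R : realFieldType) (u : nat -> R) (l : R) :
  u n @[n --> \oo] --> l -> exists M, forall k, `|u k| <= M.
Proof.
move=> ul; have : cvgn (u : nat -> R^o) by apply: cvgP ul.
move=> /cvg_seq_bounded [M [_]]/(_ (`|M| + 1)).
rewrite (le_lt_trans (ler_norm _)) ?ltrDl// => /(_ erefl) uM.
by exists (`|M| + 1) => k; apply: uM.
Qed.

Lemma within_continuous_cvgn (T U : topologicalType) (A : set T) (f : T -> U)
    (u : nat -> T) (l : T) :
  {within A, continuous f} -> A l -> (forall k, A (u k)) ->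
  u n @[n --> \oo] --> l -> f (u n) @[n --> \oo] --> f l.
Proof.
move=> /subspace_continuousP/(_ l) fc /fc fl Au ul.
apply: cvg_trans fl => P /= fP.
have {}fP : nbhs l (fun y => A y -> P (f y)) := fP.
exact: filterS (fun n hn => hn (Au n)) (ul _ fP).
Qed.

Lemma norm_ln_le (R : realType) (y : R) :
  0 < y -> `|ln y| <= `|1 - y| * (1 + y^-1).
Proof.
move=> y_gt0.
have yV_gt0 : 0 < y^-1 by rewrite invr_gt0.
have ln_le : ln y <= y - 1.
  by have := @le_ln1Dx _ (y - 1); rewrite (addrC 1) subrK; apply; lra.
have lnV_le : - ln y <= (1 - y) * y^-1.
  have := @le_ln1Dx _ (y^-1 - 1); rewrite (addrC 1) subrK lnV ?posrE //.
  by rewrite mulrBl mul1r mulfV ?gt_eqF //; apply; lra.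
have [ln_ge0|ln_lt0] := lerP 0 (ln y).
  rewrite ger0_norm // mulrDr mulr1 distrC.
  apply: le_trans ln_le _; apply: le_trans (ler_norm _) _.
  by rewrite lerDl mulr_ge0 // ltW.
rewrite ltr0_norm // mulrDr mulr1.
apply: le_trans lnV_le _; apply: le_trans (ler_norm _) _.
by rewrite normrM (gtr0_norm yV_gt0) lerDr.
Qed.

Lemma prod_expR_series_ln (R : realType) (a : nat -> R) n :
  (forall k, 0 < a k) -> \prod_(k < n) a k = expR (series (fun k => ln (a k)) n).
Proof.
move=> a_gt0; rewrite /series /= expR_sum big_mkord.
by apply: eq_bigr => k _; rewrite lnK // posrE.
Qed.

Lemma cvg_series_shiftn (R : numFieldType) (u : nat -> R) k :
  cvgn (series u) ->
  series (fun m => u (m + k)%N) n @[n --> \oo] --> limn (series u) - series u k.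
Proof.
move=> /cvg_ex[/= l ul]; rewrite (cvg_lim _ ul) //.
have shift n : series (fun m => u (m + k)%N) n = series u (n + k)%N - series u k.
  rewrite series_addn addrAC subrr add0r /series /=.
  by rewrite -[X in _ = \sum_(X <= _ < _) _](add0n k) big_addn addnK.
rewrite (eq_cvg _ _ shift); apply: cvgB; last exact: cvg_cst.
by rewrite (@cvg_shiftn k _ (series u)).
Qed.

Section JacksonSeries.
Variables (R : realType) (q : R).

Lemma jacksonE (f : R -> R) (y l : R) :
  series (fun n => (1 - q) * q ^+ n * y * f (q ^+ n * y)) n @[n --> \oo] --> l ->
  jackson q f y = l.
Proof. exact: cvg_lim. Qed.

(* The weight (1-q) q^n y cancels the 1/t sampled at t = q^n y; when y = 0 the
   integrand is the junk value f 0 / 0 = 0, which is why f 0 = 0 is needed. *)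
Lemma jackson_div (f : R -> R) (y l : R) : f 0 = 0 ->
  series (fun n => f (q ^+ n * y)) n @[n --> \oo] --> l ->
  jackson q (fun t => f t / t) y = (1 - q) * l.
Proof.
move=> f0 fl; apply: jacksonE.
have term n : (1 - q) * q ^+ n * y * (f (q ^+ n * y) / (q ^+ n * y)) =
    (1 - q) * f (q ^+ n * y).
  have [->|qy_neq0] := eqVneq (q ^+ n * y) 0; last first.
    by rewrite -(mulrA (1 - q)) -mulrA [(q ^+ n * y) * _]mulrC divfK.
  by rewrite f0 mul0r !mulr0.
have sum_eq N : series (fun n => (1 - q) * q ^+ n * y * (f (q ^+ n * y) / (q ^+ n * y))) N =
    (1 - q) * series (fun n => f (q ^+ n * y)) N.
  by rewrite /series /= mulr_sumr; apply: eq_bigr => n _; exact: term.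
rewrite (eq_cvg _ _ sum_eq); exact: cvgM (cvg_cst _) fl.
Qed.

End JacksonSeries.

Section GeometricDomination.
Variables (R : realType) (q : R).
Hypotheses (q_gt0 : 0 < q) (q_lt1 : q < 1).

Lemma is_cvg_series_geometric_le (u : nat -> R) (M : R) :
  (forall k, `|u k| <= M * q ^+ k) -> cvgn (series u).
Proof.
move=> uM; apply: normed_cvg.
apply: (@series_le_cvg _ _ (geometric M q)) => [k|k|k|].
- exact: normr_ge0.
- exact: le_trans (normr_ge0 _) (uM k).
- exact: uM.
- by apply: is_cvg_geometric_series; rewrite ger0_norm ?ltW.
Qed.

Section LogSeries.
Variables (a : nat -> R) (M : R).
Hypotheses (a_gt0 : forall k, 0 < a k) (a_near1 : forall k, `|1 - a k| <= M * q ^+ k).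

Lemma is_cvg_series_ln : cvgn (series (fun k => ln (a k))).
Proof.
have a_cvg1 : a n @[n --> \oo] --> (1 : R).
  have a_eq k : a k = 1 - (1 - a k) by lra.
  rewrite (eq_cvg _ _ a_eq).
  have := cvgB (cvg_cst (1 : R)) (cvg_series_cvg_0 (is_cvg_series_geometric_le a_near1)).
  by rewrite subr0; exact.
have [C aVC] : exists C, forall k, `|(a k)^-1| <= C.
  by apply: cvgn_ex_norm_le; apply: cvgV a_cvg1; rewrite oner_neq0.
apply: (@is_cvg_series_geometric_le _ (M * (1 + C))) => k.
apply: le_trans (norm_ln_le (a_gt0 k)) _; rewrite mulrAC.
apply: ler_pM => //; first by rewrite addr_ge0 // ltW // invr_gt0.
by rewrite lerD2l; apply: le_trans (ler_norm _) (aVC k).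
Qed.

Lemma cvg_prod_expR :
  \prod_(k < n) a k @[n --> \oo] --> expR (limn (series (fun k => ln (a k)))).
Proof.
under eq_cvg do rewrite prod_expR_series_ln //.
exact: cvg_comp _ _ is_cvg_series_ln (@continuous_expR _ _).
Qed.

End LogSeries.

Lemma bounded_geometric_samples (A : set R) (f : R -> R) (x : R) :
  {within A, continuous f} -> A 0 -> (forall k, A (q ^+ k * x)) ->
  exists M, forall k, `|f (q ^+ k * x)| <= M.
Proof.
move=> fc A0 Ax; apply: (@cvgn_ex_norm_le _ _ (f 0)).
apply: within_continuous_cvgn fc A0 Ax _.
have := @cvg_geometric R x q; rewrite ger0_norm ?ltW // => /(_ q_lt1).
by rewrite (eq_cvg _ _ (fun n => mulrC x (q ^+ n))).
Qed.

Section Factor.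
Variables (x : R) (G : R -> R) (MG : R).
Hypotheses (x_ge0 : 0 <= x) (G_bound : forall k, `|G (q ^+ k * x)| <= MG).

Lemma norm_sample_le k :
  `|(1 - q) * (q ^+ k * x) * G (q ^+ k * x)| <= (1 - q) * x * MG * q ^+ k.
Proof.
have c_ge0 : 0 <= (1 - q) * (q ^+ k * x).
  by apply: mulr_ge0; [rewrite subr_ge0 ltW | rewrite mulr_ge0 // exprn_ge0 // ltW].
rewrite normrM (ger0_norm c_ge0).
apply: le_trans (ler_wpM2l c_ge0 (G_bound k)) _.
by rewrite le_eqVlt; apply/orP; left; apply/eqP; ring.
Qed.

Let g k := 1 - (1 - q) * (q ^+ k * x) * G (q ^+ k * x).
Hypothesis g_gt0 : forall k, 0 < g k.

Lemma factor_near1 k : `|1 - g k| <= (1 - q) * x * MG * q ^+ k.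
Proof. by rewrite /g opprB addrC subrK norm_sample_le. Qed.

Lemma is_cvg_series_ln_factor : cvgn (series (fun k => ln (g k))).
Proof. exact: is_cvg_series_ln g_gt0 factor_near1. Qed.

Lemma cvg_prod_factor :
  \prod_(k < n) g k @[n --> \oo] --> expR (limn (series (fun k => ln (g k)))).
Proof. exact: cvg_prod_expR g_gt0 factor_near1. Qed.

Lemma expR_jackson_ln_factor :
  expR ((1 - q)^-1 * jackson q (fun t => ln (1 - (1 - q) * t * G t) / t) x) =
  expR (limn (series (fun k => ln (g k)))).
Proof.
rewrite (@jackson_div _ _ _ _ (limn (series (fun k => ln (g k))))).
- by rewrite mulKf // subr_eq0 gt_eqF.
- by rewrite !(mulr0, mul0r) subr0 ln1.
- exact: is_cvg_series_ln_factor.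
Qed.

End Factor.
End GeometricDomination.

Section LambdaProduct.
Variables (R : realType) (q : R) (Rf Sf Tf : R -> R) (x MR MS MT : R).
Hypotheses (q_gt0 : 0 < q) (q_lt1 : q < 1) (x_ge0 : 0 <= x).
Hypotheses (Rf_bound : forall k, `|Rf (q ^+ k * x)| <= MR)
  (Sf_bound : forall k, `|Sf (q ^+ k * x)| <= MS)
  (Tf_bound : forall k, `|Tf (q ^+ k * x)| <= MT).
Let a k := 1 - (1 - q) * (q ^+ k * x) * Rf (q ^+ k * x).
Let d k := 1 - (1 - q) * (q ^+ k * x) * Tf (q ^+ k * x).
Let s k := - ((1 - q) * (q ^+ k * x) * Sf (q ^+ k * x)).
Hypotheses (a_gt0 : forall k, 0 < a k) (d_gt0 : forall k, 0 < d k).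
Let PA n := \prod_(k < n) a k.
Let PD n := \prod_(k < n) d k.
Let w k := s k * PD k / PA k.+1.
Let EA := expR (limn (series (fun k => ln (a k)))).
Let ED := expR (limn (series (fun k => ln (d k)))).

Lemma Lamn_mx2 n : Lamn q Rf Sf Tf x n = mx2 (PA n) (PA n * series w n) 0 (PD n).
Proof.
elim: n => [|n IH].
  by rewrite /= mx2_1 /PA /PD !big_ord0 /series /= big_geq // mulr0.
have PA_S : PA n.+1 = PA n * a n by rewrite /PA big_ord_recr.
have PD_S : PD n.+1 = PD n * d n by rewrite /PD big_ord_recr.
have PA_neq0 : PA n != 0 by rewrite gt_eqF // prodr_gt0.
have a_neq0 : a n != 0 by rewrite gt_eqF.
rewrite /= IH (_ : Lam _ _ _ _ _ = mx2 (a n) (s n) 0 (d n)); last exact: Lam_mx2.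
rewrite mulmx2 PA_S PD_S seriesSr /w PA_S.
by congr mx2; [ring | field; rewrite a_neq0 PA_neq0 | ring | ring].
Qed.

Lemma is_cvg_series_corner : cvgn (series w).
Proof.
have [CD PD_le] := cvgn_ex_norm_le (cvg_prod_factor q_gt0 q_lt1 x_ge0 Tf_bound d_gt0).
have [CA PAV_le] : exists C, forall n, `|(PA n)^-1| <= C.
  apply: cvgn_ex_norm_le; apply: cvgV (cvg_prod_factor q_gt0 q_lt1 x_ge0 Rf_bound a_gt0).
  by rewrite gt_eqF ?expR_gt0.
apply: (@is_cvg_series_geometric_le _ q q_gt0 q_lt1 _ ((1 - q) * x * MS * CD * CA)) => k.
have s_le : `|s k| <= (1 - q) * x * MS * q ^+ k.
  by rewrite normrN norm_sample_le.
rewrite /w !normrM.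
apply: le_trans (ler_pM _ _ (ler_pM _ _ s_le (PD_le k)) (PAV_le k.+1)) _ => //.
by rewrite !(mulrAC _ (q ^+ k)).
Qed.

Lemma expR_jackson_ln_ratio k :
  expR ((1 - q)^-1 * jackson q (fun t => t^-1 * ln ((1 - (1 - q) * t * Rf t) /
                                              (1 - (1 - q) * t * Tf t))) (q ^+ k * x)) =
  EA / PA k * (PD k / ED).
Proof.
pose Sa := series (fun k => ln (a k)); pose Sd := series (fun k => ln (d k)).
have la := is_cvg_series_ln_factor q_gt0 q_lt1 x_ge0 Rf_bound a_gt0.
have ld := is_cvg_series_ln_factor q_gt0 q_lt1 x_ge0 Tf_bound d_gt0.
rewrite (_ : (fun t => _) = fun t => ln ((1 - (1 - q) * t * Rf t) /
                                         (1 - (1 - q) * t * Tf t)) / t); last first.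
  by apply/funext => t; rewrite mulrC.
rewrite (@jackson_div _ _ _ _ ((limn Sa - Sa k) - (limn Sd - Sd k))).
- rewrite mulKf ?subr_eq0 ?gt_eqF // !expRB /EA /ED.
  by rewrite /PA /PD !prod_expR_series_ln //; field; rewrite !gt_eqF ?expR_gt0.
- by rewrite !(mulr0, mul0r) subr0 divr1 ln1.
have term m : ln ((1 - (1 - q) * (q ^+ m * (q ^+ k * x)) * Rf (q ^+ m * (q ^+ k * x))) /
                  (1 - (1 - q) * (q ^+ m * (q ^+ k * x)) * Tf (q ^+ m * (q ^+ k * x)))) =
              ln (a (m + k)%N) - ln (d (m + k)%N).
  by rewrite !(mulrA (q ^+ m)) -exprD ln_div // posrE; [apply: a_gt0 | apply: d_gt0].
under eq_cvg do rewrite /series /= (eq_bigr _ (fun m _ => term m)) sumrB.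
exact: cvgB (@cvg_series_shiftn _ _ k la) (@cvg_series_shiftn _ _ k ld).
Qed.

Lemma jackson_corner :
  jackson q (fun t => Sf t / (1 - (1 - q) * t * Rf t) *
    expR ((1 - q)^-1 * jackson q (fun r => r^-1 * ln ((1 - (1 - q) * r * Rf r) /
                                              (1 - (1 - q) * r * Tf r))) t)) x =
  - (EA / ED) * limn (series w).
Proof.
apply: jacksonE.
have sum_eq N : series (fun k => (1 - q) * q ^+ k * x *
    (Sf (q ^+ k * x) / (1 - (1 - q) * (q ^+ k * x) * Rf (q ^+ k * x)) *
     expR ((1 - q)^-1 * jackson q (fun r => r^-1 * ln ((1 - (1 - q) * r * Rf r) /
                              (1 - (1 - q) * r * Tf r))) (q ^+ k * x)))) N =
    - (EA / ED) * series w N.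
  rewrite /series /= mulr_sumr; apply: eq_bigr => k _.
  have PA_S : PA k.+1 = PA k * a k by rewrite /PA big_ord_recr.
  have PA_neq0 : PA k != 0 by rewrite gt_eqF // prodr_gt0.
  have a_neq0 : a k != 0 by rewrite gt_eqF.
  have ED_neq0 : ED != 0 by rewrite gt_eqF ?expR_gt0.
  rewrite expR_jackson_ln_ratio /w PA_S /s -/(a k).
  by field; rewrite a_neq0 PA_neq0 ED_neq0.
rewrite (eq_cvg _ _ sum_eq).
exact: cvgM (cvg_cst _) is_cvg_series_corner.
Qed.

Lemma cvg_Lamn :
  Lamn q Rf Sf Tf x n @[n --> \oo] --> mx2 EA (EA * limn (series w)) 0 ED.
Proof.
under eq_cvg do rewrite Lamn_mx2.
have PA_cvg := cvg_prod_factor q_gt0 q_lt1 x_ge0 Rf_bound a_gt0.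
have PD_cvg := cvg_prod_factor q_gt0 q_lt1 x_ge0 Tf_bound d_gt0.
apply: cvg_mx2 => //; last exact: cvg_cst.
exact: cvgM PA_cvg is_cvg_series_corner.
Qed.

End LambdaProduct.

Unset Implicit Arguments.

Theorem proposition1 (R : realType) (q : R) (b : \bar R)
  (Rf Sf Tf : R -> R) :
  0 < q -> q < 1 -> (0 < b)%E ->
  {within [set t : R | 0 <= t /\ (t%:E < b)%E], continuous Rf} ->
  {within [set t : R | 0 <= t /\ (t%:E < b)%E], continuous Sf} ->
  {within [set t : R | 0 <= t /\ (t%:E < b)%E], continuous Tf} ->
  (forall t : R, 0 <= t -> (t%:E < b)%E -> 0 < 1 - (1 - q) * t * Rf t) ->
  (forall t : R, 0 <= t -> (t%:E < b)%E -> 0 < 1 - (1 - q) * t * Tf t) ->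
  forall x : R, 0 <= x -> (x%:E < b)%E ->
  let ER := fun y => expR ((1 - q)^-1 *
              jackson q (fun t => ln (1 - (1 - q) * t * Rf t) / t) y) in
  let ET := fun y => expR ((1 - q)^-1 *
              jackson q (fun t => ln (1 - (1 - q) * t * Tf t) / t) y) in
  let B := - ET x * jackson q (fun t =>
              Sf t / (1 - (1 - q) * t * Rf t) *
              expR ((1 - q)^-1 * jackson q (fun s =>
                 s^-1 * ln ((1 - (1 - q) * s * Rf s) /
                            (1 - (1 - q) * s * Tf s))) t)) x in
  Lamn q Rf Sf Tf x n @[n --> \oo] --> mx2 (ER x) B 0 (ET x).
Proof.
move=> q_gt0 q_lt1 b_gt0 Rf_cont Sf_cont Tf_cont R_pos T_pos x x_ge0 x_lt_b ER ET B.
set I := [set t : R | 0 <= t /\ (t%:E < b)%E] in Rf_cont Sf_cont Tf_cont.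
have I0 : I 0 by rewrite /I /=; split.
have Ix k : I (q ^+ k * x).
  rewrite /I /=.
  split; first by rewrite mulr_ge0 // exprn_ge0 // ltW.
  by apply: le_lt_trans x_lt_b; rewrite lee_fin ler_piMl // exprn_ile1 // ltW.
have [MR Rf_bound] := bounded_geometric_samples q_gt0 q_lt1 Rf_cont I0 Ix.
have [MS Sf_bound] := bounded_geometric_samples q_gt0 q_lt1 Sf_cont I0 Ix.
have [MT Tf_bound] := bounded_geometric_samples q_gt0 q_lt1 Tf_cont I0 Ix.
have a_gt0 k := R_pos _ (Ix k).1 (Ix k).2.
have d_gt0 k := T_pos _ (Ix k).1 (Ix k).2.
rewrite {}/B {}/ER {}/ET (jackson_corner q_gt0 q_lt1 x_ge0 Rf_bound Sf_bound Tf_bound a_gt0 d_gt0).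
rewrite (expR_jackson_ln_factor q_gt0 q_lt1 x_ge0 Rf_bound a_gt0).
rewrite (expR_jackson_ln_factor q_gt0 q_lt1 x_ge0 Tf_bound d_gt0).
have corner_eq (E1 E2 W : R) : 0 < E2 -> - E2 * (- (E1 / E2) * W) = E1 * W.
  by move=> E2_gt0; field; rewrite gt_eqF.
rewrite corner_eq ?expR_gt0 //.
exact: (cvg_Lamn q_gt0 q_lt1 x_ge0 Rf_bound Sf_bound Tf_bound a_gt0 d_gt0).
Qed.
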